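(* Let $(S,* )$ be a finite cycle set and let $k\ge 1$. Let $S^{[k]}=\{s^{[k]}: s\in S\}\subseteq M$ and define $s^{[k]}\star t^{[k]}=\big(\psi_k(s)(t)\big)^{[k]}$ for $s,t\in S$. Then $(S^{[k]},\star)$ is a cycle set.
   Context: A cycle set is a set $S$ with a binary operation $*$ such that each $t\mapsto s*t$ is bijective and $(s*t)*(s*u)=(t*s)*(t*u)$ for all $s,t,u$. Write $S=\{s_1,\dots,s_n\}$, let $\psi(s)\in\mathfrak S_n$ satisfy $s_i*s_j=s_{\psi(s_i)(j)}$ (we write $\psi(s)(s_j)=s_{\psi(s)(j)}$), and $T(s)=s*s$. The structure monoid $M$ is the monoid with presentation $\langle S\mid s(s*t)=t(t*s),\ s\ne t\rangle$. For $s\in S$, $k\ge0$: $s^{[k]}=s\,T(s)\,T^2(s)\cdots T^{k-1}(s)\in M$ and $\psi_k(s)=\psi(T^{k-1}(s))\circ\cdots\circ\psi(T(s))\circ\psi(s)$. For $k\ge1$ the map $s\mapsto s^{[k]}$ is injective, so $\star$ is well defined. *)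

From mathcomp Require Import all_boot.
From Stdlib Require Import Relations.Relation_Operators.
Set Implicit Arguments. Unset Strict Implicit. Unset Printing Implicit Defensive.

Definition is_cycle_set (S : Type) (op : S -> S -> S) : Prop :=
  (forall s, bijective (op s)) /\
  (forall s t u, op (op s t) (op s u) = op (op t s) (op t u)).

Inductive mstep (S : Type) (op : S -> S -> S) : seq S -> seq S -> Prop :=
  | MStep (a b : seq S) (s t : S) :
      s <> t -> mstep op (a ++ [:: s; op s t] ++ b) (a ++ [:: t; op t s] ++ b).

(* Equality in the structure monoid M = <S | s(s*t) = t(t*s), s <> t>:
   words (elements of the free monoid seq S) modulo the congruence generated
   by the relations, i.e. the equivalence closure of mstep. *)
Definition meq (S : Type) (op : S -> S -> S) : seq S -> seq S -> Prop :=
  clos_refl_sym_trans (seq S) (mstep op).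

Definition Tmap (S : Type) (op : S -> S -> S) (s : S) : S := op s s.

Definition bracket (S : Type) (op : S -> S -> S) (k : nat) (s : S) : seq S :=
  mkseq (fun i => iter i (Tmap op) s) k.

(* psi_k(s)(t), where psi(s)(t) = s * t and
   psi_k(s) = psi(T^(k-1) s) o ... o psi(T s) o psi(s),
   i.e. psi_0(s) = id, psi_(k+1)(s) = psi_k(T s) o psi(s). *)
Fixpoint psik (S : Type) (op : S -> S -> S) (k : nat) (s t : S) : S :=
  match k with
  | 0 => t
  | k'.+1 => psik op k' (Tmap op s) (op s t)
  end.

From mathcomp Require Import all_boot.
From Stdlib Require Import Relations.Relation_Operators FunctionalExtensionality.

Set Implicit Arguments.
Unset Strict Implicit.
Unset Printing Implicit Defensive.

(* Write a word x_1 ... x_n over a cycle set in the coordinates y_i given by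
   x_i = phi_(i-1) y_i, where phi_0 = id and phi_i = psi(x_i) o phi_(i-1).
   The cycle-set law makes phi_i unchanged when two adjacent coordinates are
   swapped, and the relation s (s*t) = t (t*s) is exactly such a swap, while
   s^[k] has coordinates s^k.  So the multiplicity of y among the coordinates
   is an invariant of the structure monoid, which makes s |-> s^[k] injective;
   and psi_k(psi_k(s) t) o psi_k(s), the map reached after the coordinates
   s^k t^k, equals the one reached after t^k s^k: the cycle-set law for the
   star. *)

Section PermFoldl.
Variables (T : eqType) (R : Type) (f : R -> T -> R).
Hypothesis fAC : forall x y z, f (f x y) z = f (f x z) y.

Lemma foldl_cat_cons x s1 y s2 : foldl f x (s1 ++ y :: s2) = foldl f (f x y) (s1 ++ s2).
Proof. by elim: s1 x => //= z s1 IHs1 x; rewrite IHs1 fAC. Qed.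

Lemma perm_foldl x s1 s2 : perm_eq s1 s2 -> foldl f x s1 = foldl f x s2.
Proof.
elim: s1 x s2 => [|y s1 IHs1] x s2 eq_s12.
  by move: (perm_size eq_s12); case: s2 {eq_s12}.
have y_s2 : y \in s2 by rewrite -(perm_mem eq_s12) mem_head.
case: (splitPr y_s2) eq_s12 => s21 s22 eq_s12.
rewrite foldl_cat_cons /=; apply: IHs1.
by rewrite -(perm_cons y) (permPl eq_s12) -cat1s perm_catCA.
Qed.

End PermFoldl.

Lemma meq_invariant (S T : Type) (op : S -> S -> S) (f : seq S -> T) :
  (forall w w', mstep op w w' -> f w = f w') ->
  forall w w', meq op w w' -> f w = f w'.
Proof.
move=> fP w w'; elim=> [u v /fP | u | u v _ -> | u v x _ -> _ ->] //.
Qed.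

Section CycleSet.
Variables (S : eqType) (op : S -> S -> S).
Hypothesis op_bij : forall s, bijective (op s).
Hypothesis cycle_law : forall s t u, op (op s t) (op s u) = op (op t s) (op t u).

Lemma bracketS k s : bracket op k.+1 s = s :: bracket op k (Tmap op s).
Proof.
rewrite /bracket /mkseq /= -[1]/(1 + 0) iotaDl -map_comp.
by congr (_ :: _); apply: eq_map => i /=; rewrite add0n -iterS iterSr.
Qed.

(* For phi = id, the multiplicity of y among the coordinates of w. *)
Fixpoint coord_count (phi : S -> S) (w : seq S) (y : S) : nat :=
  if w is x :: w' then (x == phi y) + coord_count (op x \o phi) w' y else 0.

Lemma coord_count_mstep phi w w' y :
  mstep op w w' -> coord_count phi w y = coord_count phi w' y.
Proof.
case=> a b s t _; elim: a phi => [|x a IHa] phi /=; last by rewrite IHa.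
rewrite !(inj_eq (bij_inj (op_bij _))) !addnA [(s == _) + _]addnC; congr (_ + _).
by congr coord_count; apply: functional_extensionality => z /=; rewrite cycle_law.
Qed.

Lemma coord_count_bracket k phi s y :
  coord_count phi (bracket op k s) y = k * (s == phi y).
Proof.
elim: k phi s => [|k IHk] phi s; first by rewrite /bracket.
by rewrite bracketS /= IHk /Tmap (inj_eq (bij_inj (op_bij _))) mulSn.
Qed.

Lemma meq_bracket_inj k s s' :
  0 < k -> meq op (bracket op k s) (bracket op k s') -> s = s'.
Proof.
move=> k_gt0 /(meq_invariant (fun w w' => @coord_count_mstep id w w' s')).
rewrite !coord_count_bracket eqxx muln1.
by case: eqP => // _; rewrite muln0 => k0; rewrite -k0 in k_gt0.
Qed.

Lemma psik_bij k s : bijective (psik op k s).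
Proof. by elim: k s => [|k IHk] s /=; [exists id | apply: bij_comp]. Qed.

Definition shift (phi : S -> S) (y : S) : S -> S := op (phi y) \o phi.

Lemma shiftAC phi y z : shift (shift phi y) z = shift (shift phi z) y.
Proof. by apply: functional_extensionality => u; rewrite /shift /= cycle_law. Qed.

Lemma foldl_shift_nseq k phi s :
  foldl shift phi (nseq k s) = fun z => psik op k (phi s) (phi z).
Proof. by elim: k phi => [|k IHk] phi //=; rewrite IHk. Qed.

Lemma psik_cycle_law k s t u :
  psik op k (psik op k s t) (psik op k s u) = psik op k (psik op k t s) (psik op k t u).
Proof.
have shift_nseq2 a b : foldl shift id (nseq k a ++ nseq k b) =
    fun z => psik op k (psik op k a b) (psik op k a z).
  by rewrite foldl_cat !foldl_shift_nseq.
have := perm_foldl shiftAC id (permEl (perm_catC (nseq k s) (nseq k t))).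
by rewrite !shift_nseq2 => /(congr1 (@^~ u)).
Qed.

End CycleSet.

Theorem mainTheorem9 (S : finType) (op : S -> S -> S) (k : nat) :
  is_cycle_set op -> 1 <= k ->
  let B := bracket op k in
  let EqM := meq op in
  let st := psik op k in
  (* well-definedness of the star on S^[k] *)
  (forall s s' t t', EqM (B s) (B s') -> EqM (B t) (B t') ->
       EqM (B (st s t)) (B (st s' t'))) /\
  (* y |-> x * y is a bijection of S^[k] *)
  (forall s,
     (forall t t', EqM (B (st s t)) (B (st s t')) -> EqM (B t) (B t')) /\
     (forall u, exists t, EqM (B (st s t)) (B u))) /\
  (* (x*y)*(x*z) = (y*x)*(y*z) in S^[k] *)
  (forall s t u,
     EqM (B (st (st s t) (st s u))) (B (st (st t s) (st t u)))).
Proof.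
move=> [op_bij cycle_law] k_gt0 B EqM st.
have B_inj s s' : EqM (B s) (B s') -> s = s' by exact: meq_bracket_inj.
split; [|split].
- by move=> s s' t t' /B_inj-> /B_inj->; apply: rst_refl.
- move=> s; have [g stK gK] := psik_bij op_bij k s; split.
  + by move=> t t' /B_inj/(can_inj stK)->; apply: rst_refl.
  + by move=> u; exists (g u); rewrite /st gK; apply: rst_refl.
- by move=> s t u; rewrite /st (psik_cycle_law cycle_law); apply: rst_refl.
Qed.
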